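(* Let $\mathcal{G}$ be a noncompact metric graph in the class $\mathbf{G}$ with finitely many edges, at least one of which is bounded, and such that every vertex of $\mathcal{G}$ is attached to an even number of half-lines (possibly zero). Then for every $p>6$ there exists $\overline{\mu}>0$, depending on $p$ and $\mathcal{G}$, such that for all $\mu\ge\overline{\mu}$ problem \[ \begin{cases} u''+u^{p-1}=\lambda u & \text{on every edge of }\mathcal{G},\\ u\in H^1(\mathcal{G}),\ u>0 & \text{on }\mathcal{G},\\ \sum_{e\succ \mathrm{v}}\frac{du}{dx_e}(\mathrm{v})=0 & \text{for every vertex }\mathrm{v}, \end{cases} \] admits a positive solution $u\in H^1_\mu(\mathcal{G})$ (for some $\lambda\in\mathbb R$) with $E(u,\mathcal{G})<0$.
   Context: A metric graph $\mathcal{G}=(\mathbb{V},\mathbb{E})$ belongs to the class $\mathbf{G}$ if it is connected, has at most countably many edges, every vertex has finite degree, and $\inf_{e\in\mathbb{E}}|e|>0$. Noncompact means it has at least one half-line or infinitely many edges. $H^1(\mathcal{G})$ is the space of continuous functions on $\mathcal{G}$, $H^1$ on each edge, with finite $H^1$ norm; $H^1_\mu(\mathcal{G})=\{v\in H^1(\mathcal{G}):\|v\|_{L^2}^2=\mu\}$; $E(u,\mathcal{G})=\frac12\|u'\|_{L^2(\mathcal G)}^2-\frac1p\|u\|_{L^p(\mathcal G)}^p$. The vertex condition is the Kirchhoff condition: the sum over edges $e$ incident at $\mathrm v$ of the outgoing derivatives of $u$ at $\mathrm v$ vanishes. *)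

From Stdlib Require Import Reals Lra.
From Coquelicot Require Import Coquelicot.
Open Scope R_scope.

(* Vertices are 0 .. nV-1.  Bounded edges are 0 .. nB-1; bounded edge i is *)
(* identified with [0, blen i], its point 0 is the vertex bsrc i and its    *)
(* point blen i is the vertex btgt i (self-loops and multiple edges are     *)
(* allowed).  Half-lines are 0 .. nH-1; half-line j is identified with      *)
(* [0, +oo) and its point 0 is the vertex hv j.                             *)
Record MGraph := {
  nV : nat; nB : nat; nH : nat;
  blen : nat -> R; bsrc : nat -> nat; btgt : nat -> nat;
  hv : nat -> nat }.

Definition wf_graph (G : MGraph) : Prop :=
  (forall i, (i < nB G)%nat ->
     0 < blen G i /\ (bsrc G i < nV G)%nat /\ (btgt G i < nV G)%nat) /\
  (forall j, (j < nH G)%nat -> (hv G j < nV G)%nat).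

Inductive reach (G : MGraph) (v : nat) : nat -> Prop :=
| reach_refl : reach G v v
| reach_step : forall w i, reach G v w -> (i < nB G)%nat ->
    (bsrc G i = w \/ btgt G i = w) ->
    reach G v (if Nat.eqb (bsrc G i) w then btgt G i else bsrc G i).

Definition connected_graph (G : MGraph) : Prop :=
  forall v w, (v < nV G)%nat -> (w < nV G)%nat -> reach G v w.

Fixpoint rsum (n : nat) (f : nat -> R) : R :=
  match n with O => 0 | S k => rsum k f + f k end.

Fixpoint ncount (n : nat) (P : nat -> bool) : nat :=
  match n with O => O | S k => (ncount k P + (if P k then 1 else 0))%nat end.

Definition nhalf (G : MGraph) (v : nat) : nat :=
  ncount (nH G) (fun j => Nat.eqb (hv G j) v).

Definition even_halflines (G : MGraph) : Prop :=
  forall v, (v < nV G)%nat -> Nat.even (nhalf G v) = true.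

(* Functions on the graph: ub i is u on bounded edge i (on [0, blen i]),   *)
(* uh j is u on half-line j (on [0,+oo)).  Values outside are irrelevant.  *)

Definition sq (x : R) : R := x * x.

Definition vertex_continuous (G : MGraph) (ub uh : nat -> R -> R) : Prop :=
  exists phi : nat -> R,
    (forall i, (i < nB G)%nat ->
       ub i 0 = phi (bsrc G i) /\ ub i (blen G i) = phi (btgt G i)) /\
    (forall j, (j < nH G)%nat -> uh j 0 = phi (hv G j)).

Definition positive_on (G : MGraph) (ub uh : nat -> R -> R) : Prop :=
  (forall i x, (i < nB G)%nat -> 0 <= x <= blen G i -> 0 < ub i x) /\
  (forall j x, (j < nH G)%nat -> 0 <= x -> 0 < uh j x).

(* on each edge: C^2 in the interior with the equation u'' + u^(p-1) = lam u,
   continuous up to the endpoints, with one-sided derivatives at the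
   endpoints given as limits of u' (dB0 i at 0, dBl i at blen i, dH j at 0). *)
Definition edge_equation (G : MGraph) (p lam : R) (ub uh : nat -> R -> R)
  (dB0 dBl dH : nat -> R) : Prop :=
  (forall i, (i < nB G)%nat ->
     (forall x, 0 < x < blen G i ->
        ex_derive (ub i) x /\ ex_derive (Derive (ub i)) x /\
        Derive (Derive (ub i)) x + Rpower (ub i x) (p - 1) = lam * ub i x) /\
     filterlim (ub i) (at_right 0) (locally (ub i 0)) /\
     filterlim (ub i) (at_left (blen G i)) (locally (ub i (blen G i))) /\
     filterlim (Derive (ub i)) (at_right 0) (locally (dB0 i)) /\
     filterlim (Derive (ub i)) (at_left (blen G i)) (locally (dBl i))) /\
  (forall j, (j < nH G)%nat ->
     (forall x, 0 < x ->
        ex_derive (uh j) x /\ ex_derive (Derive (uh j)) x /\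
        Derive (Derive (uh j)) x + Rpower (uh j x) (p - 1) = lam * uh j x) /\
     filterlim (uh j) (at_right 0) (locally (uh j 0)) /\
     filterlim (Derive (uh j)) (at_right 0) (locally (dH j))).

(* Outgoing derivative of bounded edge i at its point 0 is dB0 i, at its
   point blen i it is - dBl i; of half-line j at its origin it is dH j. *)
Definition kirchhoff (G : MGraph) (dB0 dBl dH : nat -> R) : Prop :=
  forall v, (v < nV G)%nat ->
    rsum (nB G) (fun i => if Nat.eqb (bsrc G i) v then dB0 i else 0)
  + rsum (nB G) (fun i => if Nat.eqb (btgt G i) v then - dBl i else 0)
  + rsum (nH G) (fun j => if Nat.eqb (hv G j) v then dH j else 0) = 0.

Definition H1_Lp_finite (G : MGraph) (p : R) (ub uh : nat -> R -> R) : Prop :=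
  (forall i, (i < nB G)%nat ->
     ex_RInt (fun x => sq (ub i x)) 0 (blen G i) /\
     ex_RInt (fun x => sq (Derive (ub i) x)) 0 (blen G i) /\
     ex_RInt (fun x => Rpower (ub i x) p) 0 (blen G i)) /\
  (forall j, (j < nH G)%nat ->
     ex_RInt_gen (fun x => sq (uh j x)) (at_point 0) (Rbar_locally p_infty) /\
     ex_RInt_gen (fun x => sq (Derive (uh j) x)) (at_point 0) (Rbar_locally p_infty) /\
     ex_RInt_gen (fun x => Rpower (uh j x) p) (at_point 0) (Rbar_locally p_infty)).

Definition mass (G : MGraph) (ub uh : nat -> R -> R) : R :=
  rsum (nB G) (fun i => RInt (fun x => sq (ub i x)) 0 (blen G i))
+ rsum (nH G) (fun j => RInt_gen (fun x => sq (uh j x)) (at_point 0) (Rbar_locally p_infty)).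

Definition kinetic (G : MGraph) (ub uh : nat -> R -> R) : R :=
  rsum (nB G) (fun i => RInt (fun x => sq (Derive (ub i) x)) 0 (blen G i))
+ rsum (nH G) (fun j => RInt_gen (fun x => sq (Derive (uh j) x)) (at_point 0) (Rbar_locally p_infty)).

Definition Lp_pow (G : MGraph) (p : R) (ub uh : nat -> R -> R) : R :=
  rsum (nB G) (fun i => RInt (fun x => Rpower (ub i x) p) 0 (blen G i))
+ rsum (nH G) (fun j => RInt_gen (fun x => Rpower (uh j x) p) (at_point 0) (Rbar_locally p_infty)).

(* E(u, G) = 1/2 ||u'||_2^2 - 1/p ||u||_p^p  (u > 0, so |u|^p = u^p) *)
Definition energy (G : MGraph) (p : R) (ub uh : nat -> R -> R) : R :=
  / 2 * kinetic G ub uh - / p * Lp_pow G p ub uh.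

Definition positive_solution (G : MGraph) (p lam : R) (ub uh : nat -> R -> R) : Prop :=
  vertex_continuous G ub uh /\ positive_on G ub uh /\ H1_Lp_finite G p ub uh /\
  exists dB0 dBl dH : nat -> R,
    edge_equation G p lam ub uh dB0 dBl dH /\ kirchhoff G dB0 dBl dH.

From Stdlib Require Import Reals Lra Lia FunctionalExtensionality.
From Coquelicot Require Import Coquelicot.
Open Scope R_scope.

(* On the compact core the solution is the constant c = lam ^ (1 / (p - 2)), which solves
   u'' + u ^ (p - 1) = lam u with zero derivatives; on every half-line it is a tail of the
   soliton of frequency lam, cut where the soliton equals c.  The half-lines at a vertex come
   in pairs, one tail starting after the peak of the soliton and one before it, so their
   outgoing derivatives cancel and Kirchhoff's condition holds.  With lam = exp (2 r) and
   gam = 2 / (p - 2), the mass is exp (2 gam r) (|K| + O(exp (- r))), |K| the total length of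
   the bounded edges: it is continuous in r and unbounded, so every large mass is attained.
   The energy is exp (2 gam r) exp r (O(1) - exp r |K| / p), negative for large r because the
   L^p norm of the constant on the core dominates the half-line contributions. *)

Lemma affine_cvg_p_infty (B s : R) : 0 < B ->
  filterlim (fun b => B * b + s) (Rbar_locally p_infty) (Rbar_locally p_infty).
Proof.
  intros HB P [N HN]. exists ((N - s) / B). intros x Hx. apply HN.
  apply Rmult_lt_compat_l with (r := B) in Hx; [|exact HB].
  replace (B * ((N - s) / B)) with (N - s) in Hx by (field; lra). lra.
Qed.

Lemma exp_neg_cvg_0 (C d : R) : 0 < d ->
  filterlim (fun u => C * exp (- d * u)) (Rbar_locally p_infty) (locally 0).
Proof.
  intros Hd.
  assert (H : is_lim (fun u => C * exp (- d * u + 0)) p_infty (Rbar_mult C 0)).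
  { apply (is_lim_scal_l (fun u => exp (- d * u + 0))).
    apply is_lim_comp_lin; [|lra].
    replace (Rbar_plus (Rbar_mult (- d) p_infty) 0) with m_infty; [exact is_lim_exp_m|].
    simpl. destruct (Rle_dec 0 (- d)) as [h|h]. { exfalso. lra. } reflexivity. }
  simpl in H. rewrite Rmult_0_r in H.
  eapply filterlim_ext; [|exact H]. intros u. cbv beta. now rewrite Rplus_0_r.
Qed.

Lemma continuous_at_right (f : R -> R) (x : R) :
  continuous f x -> filterlim f (at_right x) (locally (f x)).
Proof. intros H. eapply filterlim_filter_le_1; [apply filter_le_within | exact H]. Qed.

Lemma Derive_const_fun (c : R) : Derive (fun _ : R => c) = fun _ => 0.
Proof. apply functional_extensionality. intros. apply Derive_const. Qed.

Lemma continuous_onto_above (F : R -> R) (a : R) :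
  continuity F -> (forall mu, exists b, a <= b /\ mu <= F b) ->
  forall mu, F a <= mu -> exists r, a <= r /\ F r = mu.
Proof.
  intros HF Hunb mu Hmu. destruct (Hunb mu) as [b [Hab Hb]].
  destruct (IVT_gen F a b mu HF) as [r [Hr HFr]].
  - split; [apply Rle_trans with (F a); [apply Rmin_l | exact Hmu]|].
    apply Rle_trans with (F b); [exact Hb | apply Rmax_r].
  - rewrite Rmin_left in Hr by exact Hab. now exists r.
Qed.

Lemma RInt_const_0 (c b : R) : RInt (fun _ => c) 0 b = b * c.
Proof.
  rewrite (RInt_const (V := R_CompleteNormedModule)).
  unfold scal; simpl; unfold mult; simpl. ring.
Qed.

Lemma is_RInt_exp_neg (M d u v : R) : d <> 0 ->
  is_RInt (fun t => M * exp (- d * t)) u v (M / d * (exp (- d * u) - exp (- d * v))).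
Proof.
  intros Hd.
  replace (M / d * (exp (- d * u) - exp (- d * v))) with
    (minus (- M / d * exp (- d * v)) (- M / d * exp (- d * u)))
    by (unfold minus, plus, opp; simpl; field; exact Hd).
  apply (is_RInt_derive (fun t => - M / d * exp (- d * t))).
  - intros x _. auto_derive; [easy | field; exact Hd].
  - intros x _. apply (ex_derive_continuous (fun t => M * exp (- d * t))).
    auto_derive. easy.
Qed.

Lemma is_RInt_gen_of_lim (f F : R -> R) (a l : R) :
  (forall b, is_RInt f a b (F b)) ->
  filterlim F (Rbar_locally p_infty) (locally l) ->
  is_RInt_gen f (at_point a) (Rbar_locally p_infty) l.
Proof.
  intros Hf HF P HP.
  apply Filter_prod with (Q := fun x => x = a) (R := fun b => P (F b)).
  - reflexivity.
  - now apply HF.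
  - intros x y -> Hy. exists (F y). now split.
Qed.

Section ExpDecay.

Variables (g : R -> R) (M d : R).
Hypotheses (d_pos : 0 < d) (g_cont : forall y, continuous g y)
  (g_bound : forall y, Rabs (g y) <= M * exp (- d * y)).

Let ex_RInt_g (u v : R) : ex_RInt g u v.
Proof. apply (ex_RInt_continuous (V := R_CompleteNormedModule)). auto. Qed.

Lemma abs_RInt_exp_decay (u v : R) : u <= v ->
  Rabs (RInt g u v) <= M / d * exp (- d * u).
Proof.
  intros Huv.
  assert (Hcont_abs : forall x, continuous (fun t => Rabs (g t)) x).
  { intros x. apply (continuous_comp g Rabs); [apply g_cont | apply continuous_Rabs]. }
  eapply Rle_trans; [apply abs_RInt_le; [exact Huv | apply ex_RInt_g]|].
  eapply Rle_trans.
  { apply (RInt_le _ (fun t => M * exp (- d * t))); [exact Huv | | | intros; apply g_bound].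
    - now apply (ex_RInt_continuous (V := R_CompleteNormedModule)).
    - eexists. apply is_RInt_exp_neg. lra. }
  rewrite (is_RInt_unique _ _ _ _ (is_RInt_exp_neg M d u v ltac:(lra))).
  assert (0 <= M / d).
  { apply Rdiv_le_0_compat; [|exact d_pos].
    pose proof (g_bound 0). pose proof (Rabs_pos (g 0)). pose proof (exp_pos (- d * 0)). nra. }
  pose proof (exp_pos (- d * v)). nra.
Qed.

Lemma RInt_exp_decay_cvg (a : R) :
  filterlim (fun b => RInt g a b) (Rbar_locally p_infty)
    (locally (RInt_gen g (at_point a) (Rbar_locally p_infty))).
Proof.
  assert (Hcauchy : exists l, filterlim (fun b => RInt g a b) (Rbar_locally p_infty) (locally l)).
  { apply (filterlim_locally_cauchy (U := R_CompleteSpace)). intros eps.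
    exists (fun u => ball 0 eps (M / d * exp (- d * u))). split.
    { now apply (exp_neg_cvg_0 (M / d) d d_pos), locally_ball. }
    assert (Hdiff : forall u v, u <= v ->
      ball 0 eps (M / d * exp (- d * u)) -> ball (RInt g a u) eps (RInt g a v)).
    { intros u v Huv Hu. change (Rabs (RInt g a v - RInt g a u) < eps).
      change (Rabs (M / d * exp (- d * u) - 0) < eps) in Hu.
      pose proof (RInt_Chasles g a u v (ex_RInt_g a u) (ex_RInt_g u v)) as Hchasles.
      unfold plus in Hchasles; simpl in Hchasles.
      pose proof (abs_RInt_exp_decay u v Huv). pose proof (Rle_abs (M / d * exp (- d * u) - 0)).
      simpl in *. replace (RInt g a v - RInt g a u) with (RInt g u v) by lra. lra. }
    intros u v Hu Hv. destruct (Rle_dec u v) as [Huv|Hvu].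
    - now apply Hdiff.
    - apply ball_sym, Hdiff; [lra | exact Hv]. }
  destruct Hcauchy as [l Hl].
  replace (RInt_gen g (at_point a) (Rbar_locally p_infty)) with l; [exact Hl|].
  symmetry. apply (is_RInt_gen_unique (V := R_CompleteNormedModule)).
  apply (is_RInt_gen_of_lim g (RInt g a)); [|exact Hl].
  intros b. apply (RInt_correct (V := R_CompleteNormedModule)), ex_RInt_g.
Qed.

Lemma is_RInt_gen_exp_decay_affine (f : R -> R) (K B s : R) : 0 < B ->
  (forall x, f x = K * g (B * x + s)) ->
  is_RInt_gen f (at_point 0) (Rbar_locally p_infty)
    (K / B * RInt_gen g (at_point s) (Rbar_locally p_infty)).
Proof.
  intros HB Hf.
  apply (is_RInt_gen_of_lim f (fun b => K / B * RInt g s (B * b + s))).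
  - intros b.
    assert (H : is_RInt g (B * 0 + s) (B * b + s) (RInt g s (B * b + s))).
    { rewrite Rmult_0_r, Rplus_0_l. apply (RInt_correct (V := R_CompleteNormedModule)), ex_RInt_g. }
    apply is_RInt_comp_lin, (is_RInt_scal _ _ _ (K / B)) in H.
    eapply is_RInt_ext; [|exact H].
    intros x _. rewrite Hf. unfold scal; simpl; unfold mult; simpl. field. lra.
  - apply (filterlim_comp _ _ _ (fun b => RInt g s (B * b + s)) (fun z => K / B * z) _
      (locally (RInt_gen g (at_point s) (Rbar_locally p_infty)))).
    + apply (filterlim_comp _ _ _ (fun b => B * b + s) (RInt g s) _ (Rbar_locally p_infty)).
      * now apply affine_cvg_p_infty.
      * apply RInt_exp_decay_cvg.
    + apply (filterlim_scal_r (K := R_AbsRing) (V := R_NormedModule)).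
Qed.

End ExpDecay.

(** * Powers of sech and the NLS soliton *)

Lemma cosh_pos (y : R) : 0 < cosh y.
Proof. unfold cosh. pose proof (exp_pos y). pose proof (exp_pos (- y)). lra. Qed.

Lemma cosh_opp (y : R) : cosh (- y) = cosh y.
Proof. unfold cosh. rewrite Ropp_involutive. lra. Qed.

Lemma sinh_opp (y : R) : sinh (- y) = - sinh y.
Proof. unfold sinh. rewrite Ropp_involutive. lra. Qed.

Lemma exp_le_2cosh (y : R) : exp y <= 2 * cosh y.
Proof. unfold cosh. pose proof (exp_pos (- y)). lra. Qed.

Lemma tanh_sq_le_1 (y : R) : (sinh y / cosh y) * (sinh y / cosh y) <= 1.
Proof.
  assert (Hc : 0 < cosh y) by apply cosh_pos.
  assert (Hid : cosh y * cosh y - sinh y * sinh y = 1).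
  { unfold cosh, sinh. rewrite exp_Ropp. pose proof (exp_pos y). field. lra. }
  replace ((sinh y / cosh y) * (sinh y / cosh y)) with ((sinh y * sinh y) / (cosh y * cosh y))
    by (field; lra).
  apply Rmult_le_reg_r with (cosh y * cosh y); [nra|].
  unfold Rdiv. rewrite Rmult_assoc, Rinv_l by nra. nra.
Qed.

Definition arccosh (k : R) : R := ln (k + sqrt (k * k - 1)).

Lemma cosh_arccosh (k : R) : 1 <= k -> cosh (arccosh k) = k.
Proof.
  intros Hk.
  set (q := sqrt (k * k - 1)).
  assert (Hq : q * q = k * k - 1) by (apply sqrt_sqrt; nra).
  assert (Hq0 : 0 <= q) by apply sqrt_pos.
  unfold cosh, arccosh. fold q.
  rewrite exp_Ropp, exp_ln by lra.
  assert (Hinv : / (k + q) = k - q).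
  { apply Rmult_eq_reg_l with (k + q); [|lra]. rewrite Rinv_r by lra. nra. }
  rewrite Hinv. field.
Qed.

Lemma exp_sech_pow_bound (c l y : R) : 0 < c ->
  exp (c * (l - ln (cosh y))) <= exp (c * (l + ln 2)) * exp (- c * y).
Proof.
  intros Hc. rewrite <- exp_plus.
  assert (H : y - ln 2 <= ln (cosh y)).
  { rewrite <- (ln_exp y) at 1. rewrite <- ln_div by (try apply exp_pos; lra).
    apply ln_le; [apply Rdiv_lt_0_compat; [apply exp_pos | lra]|].
    pose proof (exp_le_2cosh y). apply Rmult_le_reg_r with 2; [lra|].
    unfold Rdiv. rewrite Rmult_assoc, Rinv_l by lra. lra. }
  assert (Harg : c * (l - ln (cosh y)) <= c * (l + ln 2) + - c * y) by nra.
  destruct (Rle_lt_or_eq_dec _ _ Harg) as [Hlt|Heq].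
  - left. now apply exp_increasing.
  - right. now rewrite Heq.
Qed.

Definition sech_pow (g a B s x : R) : R := exp (g * (a - ln (cosh (B * x + s)))).

Definition sech_pow_d1 (g a B s x : R) : R :=
  sech_pow g a B s x * (- g * B * sinh (B * x + s) / cosh (B * x + s)).

Definition sech_pow_d2 (g a B s x : R) : R :=
  sech_pow g a B s x *
    (B * B * (g * g - g * (g + 1) / (cosh (B * x + s) * cosh (B * x + s)))).

Section SechPow.

Variables g a B s : R.

Lemma is_derive_sech_pow (x : R) : is_derive (sech_pow g a B s) x (sech_pow_d1 g a B s x).
Proof.
  unfold sech_pow, sech_pow_d1. pose proof (cosh_pos (B * x + s)) as Hc.
  unfold cosh, sinh in *. auto_derive; [lra|].
  unfold sech_pow, cosh. match goal with |- ?lhs = ?rhs => change (@eq R lhs rhs) end.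
  unfold Rminus, Rdiv. field. lra.
Qed.

Lemma is_derive_sech_pow_d1 (x : R) :
  is_derive (sech_pow_d1 g a B s) x (sech_pow_d2 g a B s x).
Proof.
  unfold sech_pow_d1, sech_pow_d2, sech_pow. pose proof (cosh_pos (B * x + s)) as Hc.
  unfold cosh, sinh in *. auto_derive; [lra|].
  unfold sech_pow, cosh. match goal with |- ?lhs = ?rhs => change (@eq R lhs rhs) end.
  unfold Rminus, Rdiv. rewrite !exp_Ropp in *.
  set (w := exp (B * x + s)) in *. assert (0 < w) by apply exp_pos.
  field. split; nra.
Qed.

Lemma Derive_sech_pow (x : R) : Derive (sech_pow g a B s) x = sech_pow_d1 g a B s x.
Proof. apply is_derive_unique, is_derive_sech_pow. Qed.

Lemma Derive2_sech_pow (x : R) :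
  Derive (Derive (sech_pow g a B s)) x = sech_pow_d2 g a B s x.
Proof.
  rewrite (Derive_ext _ _ _ Derive_sech_pow).
  apply is_derive_unique, is_derive_sech_pow_d1.
Qed.

End SechPow.

Definition gam (p : R) : R := 2 / (p - 2).
Definition kap (p : R) : R := sqrt (p / 2).

Lemma gam_pos (p : R) : 2 < p -> 0 < gam p.
Proof. intros Hp. unfold gam. apply Rdiv_lt_0_compat; lra. Qed.

Lemma kap_gt_1 (p : R) : 2 < p -> 1 < kap p.
Proof. intros Hp. unfold kap. rewrite <- sqrt_1. apply sqrt_lt_1; lra. Qed.

Lemma kap_sq (p : R) : 2 < p -> kap p * kap p = p / 2.
Proof. intros Hp. unfold kap. apply sqrt_sqrt. lra. Qed.

(* [(exp r * kap p * sech (exp r / gam p * x + s)) ^ gam p], the soliton of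
   [u'' + u ^ (p - 1) = exp r * exp r * u] translated by [s]. *)
Definition soliton (p r s : R) : R -> R :=
  sech_pow (gam p) (r + ln (kap p)) (exp r / gam p) s.

Definition mass_density (p y : R) : R := exp (2 * gam p * (ln (kap p) - ln (cosh y))).
Definition kinetic_density (p y : R) : R :=
  mass_density p y * ((sinh y / cosh y) * (sinh y / cosh y)).
Definition potential_density (p y : R) : R := exp (p * gam p * (ln (kap p) - ln (cosh y))).

Lemma continuous_exp_sech_pow (c l y : R) :
  continuous (fun y => exp (c * (l - ln (cosh y)))) y.
Proof.
  apply (ex_derive_continuous (K := R_AbsRing) (V := R_NormedModule)).
  pose proof (cosh_pos y). unfold cosh in *. auto_derive. lra.
Qed.

Lemma continuous_kinetic_density (p y : R) : continuous (kinetic_density p) y.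
Proof.
  apply (ex_derive_continuous (K := R_AbsRing) (V := R_NormedModule)).
  pose proof (cosh_pos y). unfold kinetic_density, mass_density, cosh, sinh in *.
  auto_derive. repeat split; lra.
Qed.

Section DensityBounds.

Variable p : R.
Hypothesis p_gt_2 : 2 < p.

Let C := exp (2 * gam p * (ln (kap p) + ln 2)).

Lemma mass_density_bound (y : R) :
  Rabs (mass_density p y) <= C * exp (- (2 * gam p) * y).
Proof.
  pose proof (gam_pos p p_gt_2).
  rewrite Rabs_pos_eq by (left; apply exp_pos). apply exp_sech_pow_bound. lra.
Qed.

Lemma kinetic_density_bound (y : R) :
  Rabs (kinetic_density p y) <= C * exp (- (2 * gam p) * y).
Proof.
  pose proof (mass_density_bound y) as Hm. pose proof (tanh_sq_le_1 y).
  pose proof (Rabs_pos (mass_density p y)).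
  unfold kinetic_density. rewrite Rabs_mult, (Rabs_pos_eq (_ * _)) by nra. nra.
Qed.

Lemma potential_density_bound (y : R) :
  Rabs (potential_density p y) <=
    exp (p * gam p * (ln (kap p) + ln 2)) * exp (- (p * gam p) * y).
Proof.
  pose proof (gam_pos p p_gt_2).
  rewrite Rabs_pos_eq by (left; apply exp_pos). apply exp_sech_pow_bound. nra.
Qed.

End DensityBounds.

Section Soliton.

Variables p r : R.
Hypothesis p_gt_2 : 2 < p.

Lemma soliton_nls (s x : R) :
  Derive (Derive (soliton p r s)) x + Rpower (soliton p r s x) (p - 1) =
  exp r * exp r * soliton p r s x.
Proof.
  unfold soliton. rewrite Derive2_sech_pow. unfold sech_pow_d2, Rpower.
  set (P := sech_pow (gam p) (r + ln (kap p)) (exp r / gam p) s x).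
  unfold P at 2. unfold sech_pow. rewrite ln_exp.
  set (E := cosh (exp r / gam p * x + s)).
  assert (HE : 0 < E) by apply cosh_pos.
  pose proof (kap_gt_1 p p_gt_2) as Hk. pose proof (kap_sq p p_gt_2) as Hk2.
  (* [(p - 2) * gam p = 2], so [P ^ (p - 2) = exp (2 r) * kap p ^ 2 / E ^ 2]. *)
  replace ((p - 1) * (gam p * (r + ln (kap p) - ln E))) with
    (gam p * (r + ln (kap p) - ln E) + (r + r + ln (kap p) + ln (kap p) + - ln E + - ln E))
    by (unfold gam; field; lra).
  rewrite exp_plus.
  change (exp (gam p * (r + ln (kap p) - ln E))) with P.
  rewrite !exp_plus, !exp_Ropp, !exp_ln by lra.
  set (X := exp r). assert (0 < X) by apply exp_pos.
  replace (/ E * / E) with (/ (E * E)) by (field; lra).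
  rewrite !Rmult_assoc, <- (Rmult_assoc (kap p) (kap p)), Hk2.
  unfold gam. field. repeat split; lra.
Qed.

Lemma soliton_arccosh_0 : soliton p r (arccosh (kap p)) 0 = exp (gam p * r).
Proof.
  unfold soliton, sech_pow. rewrite Rmult_0_r, Rplus_0_l, cosh_arccosh.
  - f_equal. ring.
  - pose proof (kap_gt_1 p p_gt_2). lra.
Qed.

Lemma soliton_opp_shift_0 (s : R) : soliton p r (- s) 0 = soliton p r s 0.
Proof. unfold soliton, sech_pow. now rewrite Rmult_0_r, !Rplus_0_l, cosh_opp. Qed.

Lemma Derive_soliton_opp_shift_0 (s : R) :
  Derive (soliton p r (- s)) 0 = - Derive (soliton p r s) 0.
Proof.
  unfold soliton. rewrite !Derive_sech_pow. unfold sech_pow_d1.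
  fold (soliton p r (- s) 0) (soliton p r s 0). rewrite soliton_opp_shift_0.
  rewrite Rmult_0_r, !Rplus_0_l, cosh_opp, sinh_opp.
  unfold Rdiv. ring.
Qed.

Lemma continuous_Derive_soliton (s x : R) : continuous (Derive (soliton p r s)) x.
Proof.
  apply (continuous_ext (sech_pow_d1 (gam p) (r + ln (kap p)) (exp r / gam p) s)).
  - intros y. symmetry. apply Derive_sech_pow.
  - apply (ex_derive_continuous (K := R_AbsRing) (V := R_NormedModule)).
    eexists. apply is_derive_sech_pow_d1.
Qed.

Lemma sq_soliton (s x : R) :
  sq (soliton p r s x) = exp (2 * gam p * r) * mass_density p (exp r / gam p * x + s).
Proof. unfold sq, soliton, sech_pow, mass_density. rewrite <- !exp_plus. f_equal. ring. Qed.

Lemma is_RInt_gen_sq_soliton (s : R) :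
  is_RInt_gen (fun x => sq (soliton p r s x)) (at_point 0) (Rbar_locally p_infty)
    (exp (2 * gam p * r) / (exp r / gam p) *
       RInt_gen (mass_density p) (at_point s) (Rbar_locally p_infty)).
Proof.
  pose proof (gam_pos p p_gt_2).
  eapply (is_RInt_gen_exp_decay_affine (mass_density p) _ (2 * gam p)).
  - lra.
  - intros y. apply continuous_exp_sech_pow.
  - now apply mass_density_bound.
  - apply Rdiv_lt_0_compat; [apply exp_pos | lra].
  - apply sq_soliton.
Qed.

Lemma is_RInt_gen_sq_Derive_soliton (s : R) :
  is_RInt_gen (fun x => sq (Derive (soliton p r s) x)) (at_point 0) (Rbar_locally p_infty)
    (exp (2 * gam p * r) * (exp r * exp r) / (exp r / gam p) *
       RInt_gen (kinetic_density p) (at_point s) (Rbar_locally p_infty)).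
Proof.
  pose proof (gam_pos p p_gt_2).
  eapply (is_RInt_gen_exp_decay_affine (kinetic_density p) _ (2 * gam p)).
  - lra.
  - apply continuous_kinetic_density.
  - now apply kinetic_density_bound.
  - apply Rdiv_lt_0_compat; [apply exp_pos | lra].
  - intros x. unfold soliton at 1. rewrite Derive_sech_pow. unfold sech_pow_d1.
    fold (soliton p r s x). set (y := exp r / gam p * x + s).
    pose proof (cosh_pos y).
    replace (sq (soliton p r s x * (- gam p * (exp r / gam p) * sinh y / cosh y))) with
      (sq (soliton p r s x) * (exp r * exp r) * ((sinh y / cosh y) * (sinh y / cosh y)))
      by (unfold sq; field; lra).
    rewrite sq_soliton. fold y. unfold kinetic_density. ring.
Qed.

Lemma is_RInt_gen_Rpower_soliton (s : R) :
  is_RInt_gen (fun x => Rpower (soliton p r s x) p) (at_point 0) (Rbar_locally p_infty)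
    (exp (p * gam p * r) / (exp r / gam p) *
       RInt_gen (potential_density p) (at_point s) (Rbar_locally p_infty)).
Proof.
  pose proof (gam_pos p p_gt_2).
  eapply (is_RInt_gen_exp_decay_affine (potential_density p) _ (p * gam p)).
  - nra.
  - intros y. apply continuous_exp_sech_pow.
  - now apply potential_density_bound.
  - apply Rdiv_lt_0_compat; [apply exp_pos | lra].
  - intros x. unfold soliton, sech_pow, Rpower, potential_density.
    rewrite ln_exp, <- exp_plus. f_equal. ring.
Qed.

End Soliton.

(** * The solution on the graph *)

Lemma rsum_ext (n : nat) (f g : nat -> R) :
  (forall i, (i < n)%nat -> f i = g i) -> rsum n f = rsum n g.
Proof.
  induction n as [|n IH]; simpl; intros H; [reflexivity|].
  rewrite IH, H; [reflexivity | lia | intros; apply H; lia].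
Qed.

Lemma rsum_mult_l (n : nat) (a : R) (f : nat -> R) :
  rsum n (fun i => a * f i) = a * rsum n f.
Proof. induction n as [|n IH]; simpl; [ring | rewrite IH; ring]. Qed.

Lemma rsum_0 (n : nat) (f : nat -> R) : (forall i, f i = 0) -> rsum n f = 0.
Proof. intros H. induction n as [|n IH]; simpl; [reflexivity | rewrite IH, H; ring]. Qed.

Lemma rsum_pos (n : nat) (f : nat -> R) :
  (1 <= n)%nat -> (forall i, (i < n)%nat -> 0 < f i) -> 0 < rsum n f.
Proof.
  induction n as [|n IH]; simpl; intros Hn Hf; [lia|].
  assert (0 < f n) by (apply Hf; lia).
  destruct n as [|n]; [simpl; lra|].
  assert (0 < rsum (S n) f) by (apply IH; [lia | intros; apply Hf; lia]). lra.
Qed.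

(* The half-lines at a vertex are numbered in order and alternately carry the soliton
   tail from beyond its peak (shift [arccosh (kap p)]) or from before it (the opposite
   shift); with an even number of them their outgoing derivatives cancel in pairs. *)
Definition halfline_parity (G : MGraph) (j : nat) : bool :=
  Nat.even (ncount j (fun i => Nat.eqb (hv G i) (hv G j))).

Definition halfline_shift (G : MGraph) (p : R) (j : nat) : R :=
  if halfline_parity G j then arccosh (kap p) else - arccosh (kap p).

Lemma rsum_halfline_sign (G : MGraph) (v n : nat) :
  rsum n (fun j => if Nat.eqb (hv G j) v then (if halfline_parity G j then 1 else -1) else 0) =
  if Nat.even (ncount n (fun i => Nat.eqb (hv G i) v)) then 0 else 1.
Proof.
  induction n as [|n IH]; simpl; [reflexivity|].
  rewrite IH. destruct (Nat.eqb (hv G n) v) eqn:E.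
  - apply Nat.eqb_eq in E. unfold halfline_parity. rewrite E, Nat.even_add. simpl.
    destruct (Nat.even (ncount n (fun i => Nat.eqb (hv G i) v))); simpl; ring.
  - rewrite Nat.add_0_r. ring.
Qed.

Definition core_sol (p r : R) : nat -> R -> R := fun _ _ => exp (gam p * r).

Definition halfline_sol (G : MGraph) (p r : R) : nat -> R -> R :=
  fun j => soliton p r (halfline_shift G p j).

Section Candidate.

Variables (G : MGraph) (p r : R).
Hypothesis p_gt_2 : 2 < p.

Lemma halfline_sol_0 (j : nat) : halfline_sol G p r j 0 = exp (gam p * r).
Proof.
  unfold halfline_sol, halfline_shift.
  destruct (halfline_parity G j); rewrite ?soliton_opp_shift_0; now apply soliton_arccosh_0.
Qed.

Lemma Derive_halfline_sol_0 (j : nat) :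
  Derive (halfline_sol G p r j) 0 =
  (if halfline_parity G j then 1 else -1) * Derive (soliton p r (arccosh (kap p))) 0.
Proof.
  unfold halfline_sol, halfline_shift.
  destruct (halfline_parity G j); rewrite ?Derive_soliton_opp_shift_0; ring.
Qed.

Lemma vertex_continuous_sol : vertex_continuous G (core_sol p r) (halfline_sol G p r).
Proof.
  exists (fun _ => exp (gam p * r)). split.
  - intros i _. now split.
  - intros j _. apply halfline_sol_0.
Qed.

Lemma positive_on_sol : positive_on G (core_sol p r) (halfline_sol G p r).
Proof. split; intros; apply exp_pos. Qed.

Lemma H1_Lp_finite_sol : H1_Lp_finite G p (core_sol p r) (halfline_sol G p r).
Proof.
  split.
  - intros i _. unfold core_sol.
    rewrite Derive_const_fun.
    split; [|split]; apply (ex_RInt_const (V := R_NormedModule)).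
  - intros j _. split; [|split]; eexists.
    + now apply is_RInt_gen_sq_soliton.
    + now apply is_RInt_gen_sq_Derive_soliton.
    + now apply is_RInt_gen_Rpower_soliton.
Qed.

Lemma edge_equation_sol :
  edge_equation G p (exp r * exp r) (core_sol p r) (halfline_sol G p r)
    (fun _ => 0) (fun _ => 0) (fun j => Derive (halfline_sol G p r j) 0).
Proof.
  split.
  - intros i _. unfold core_sol. rewrite Derive_const_fun.
    repeat split; try apply filterlim_const.
    + apply ex_derive_const.
    + apply ex_derive_const.
    + (* [exp (gam p * r)] solves [c ^ (p - 2) = exp r * exp r] *)
      rewrite Derive_const. unfold Rpower. rewrite ln_exp, <- !exp_plus, Rplus_0_l.
      f_equal. unfold gam. field. lra.
  - intros j _. unfold halfline_sol. repeat split.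
    + eexists. apply is_derive_sech_pow.
    + apply (ex_derive_ext (sech_pow_d1 (gam p) (r + ln (kap p)) (exp r / gam p)
        (halfline_shift G p j))).
      * intros. symmetry. apply Derive_sech_pow.
      * eexists. apply is_derive_sech_pow_d1.
    + now apply soliton_nls.
    + apply continuous_at_right, (ex_derive_continuous (K := R_AbsRing) (V := R_NormedModule)).
      eexists. apply is_derive_sech_pow.
    + apply continuous_at_right, continuous_Derive_soliton.
Qed.

Lemma kirchhoff_sol : even_halflines G ->
  kirchhoff G (fun _ => 0) (fun _ => 0) (fun j => Derive (halfline_sol G p r j) 0).
Proof.
  intros Heven v Hv.
  rewrite !rsum_0 by (intros; destruct Nat.eqb; ring).
  rewrite (rsum_ext _ _ (fun j => Derive (soliton p r (arccosh (kap p))) 0 *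
    (if Nat.eqb (hv G j) v then (if halfline_parity G j then 1 else -1) else 0))).
  - rewrite rsum_mult_l, rsum_halfline_sign. unfold even_halflines, nhalf in Heven.
    rewrite (Heven v Hv). ring.
  - intros j _. rewrite Derive_halfline_sol_0. destruct Nat.eqb; ring.
Qed.

Lemma positive_solution_sol : even_halflines G ->
  positive_solution G p (exp r * exp r) (core_sol p r) (halfline_sol G p r).
Proof.
  intros Heven.
  split; [apply vertex_continuous_sol | split; [apply positive_on_sol | split]].
  - apply H1_Lp_finite_sol.
  - do 3 eexists. split; [apply edge_equation_sol | now apply kirchhoff_sol].
Qed.

End Candidate.

(** * Mass and energy *)

Definition core_length (G : MGraph) : R := rsum (nB G) (blen G).

Definition tail_sum (G : MGraph) (p : R) (q : R -> R) : R :=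
  rsum (nH G) (fun j => RInt_gen q (at_point (halfline_shift G p j)) (Rbar_locally p_infty)).

Section Values.

Variables (G : MGraph) (p r : R).
Hypothesis p_gt_2 : 2 < p.

Let RInt_gen_eq (f : R -> R) (l : R) :
  is_RInt_gen f (at_point 0) (Rbar_locally p_infty) l ->
  RInt_gen f (at_point 0) (Rbar_locally p_infty) = l.
Proof. apply (is_RInt_gen_unique (V := R_CompleteNormedModule)). Qed.

Lemma mass_sol :
  mass G (core_sol p r) (halfline_sol G p r) =
  exp (2 * gam p * r) * (core_length G + gam p * tail_sum G p (mass_density p) / exp r).
Proof.
  pose proof (gam_pos p p_gt_2). pose proof (exp_pos r).
  unfold mass, core_length, tail_sum.
  rewrite (rsum_ext (nB G) _ (fun i => exp (2 * gam p * r) * blen G i)).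
  2:{ intros i _. unfold core_sol, sq. rewrite RInt_const_0, <- exp_plus.
      replace (gam p * r + gam p * r) with (2 * gam p * r) by ring. ring. }
  rewrite (rsum_ext (nH G) _ (fun j => exp (2 * gam p * r) * (gam p / exp r) *
    RInt_gen (mass_density p) (at_point (halfline_shift G p j)) (Rbar_locally p_infty))).
  2:{ intros j _. apply RInt_gen_eq. unfold halfline_sol.
      replace (exp (2 * gam p * r) * (gam p / exp r)) with
        (exp (2 * gam p * r) / (exp r / gam p)) by (field; lra).
      now apply is_RInt_gen_sq_soliton. }
  rewrite !rsum_mult_l. field. lra.
Qed.

Lemma kinetic_sol :
  kinetic G (core_sol p r) (halfline_sol G p r) =
  exp (2 * gam p * r) * exp r * (gam p * tail_sum G p (kinetic_density p)).
Proof.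
  pose proof (gam_pos p p_gt_2). pose proof (exp_pos r).
  unfold kinetic, tail_sum, core_sol. rewrite Derive_const_fun.
  rewrite rsum_0 by (intros; rewrite RInt_const_0; unfold sq; ring).
  rewrite (rsum_ext (nH G) _ (fun j => exp (2 * gam p * r) * exp r * gam p *
    RInt_gen (kinetic_density p) (at_point (halfline_shift G p j)) (Rbar_locally p_infty))).
  2:{ intros j _. apply RInt_gen_eq. unfold halfline_sol.
      replace (exp (2 * gam p * r) * exp r * gam p) with
        (exp (2 * gam p * r) * (exp r * exp r) / (exp r / gam p)) by (field; lra).
      now apply is_RInt_gen_sq_Derive_soliton. }
  rewrite rsum_mult_l. ring.
Qed.

Lemma Lp_pow_sol :
  Lp_pow G p (core_sol p r) (halfline_sol G p r) =
  exp (2 * gam p * r) * exp r *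
    (exp r * core_length G + gam p * tail_sum G p (potential_density p)).
Proof.
  pose proof (gam_pos p p_gt_2). pose proof (exp_pos r).
  (* [(p - 2) * gam p = 2] *)
  assert (Hexp : exp (p * gam p * r) = exp (2 * gam p * r) * exp r * exp r).
  { rewrite <- !exp_plus. f_equal. unfold gam. field. lra. }
  unfold Lp_pow, core_length, tail_sum.
  rewrite (rsum_ext (nB G) _ (fun i => exp (2 * gam p * r) * exp r * exp r * blen G i)).
  2:{ intros i _. unfold core_sol, Rpower. rewrite RInt_const_0, ln_exp, <- Hexp.
      replace (p * (gam p * r)) with (p * gam p * r) by ring. ring. }
  rewrite (rsum_ext (nH G) _ (fun j => exp (2 * gam p * r) * exp r * gam p *
    RInt_gen (potential_density p) (at_point (halfline_shift G p j)) (Rbar_locally p_infty))).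
  2:{ intros j _. apply RInt_gen_eq. unfold halfline_sol.
      replace (exp (2 * gam p * r) * exp r * gam p) with
        (exp (p * gam p * r) / (exp r / gam p)) by (rewrite Hexp; field; lra).
      now apply is_RInt_gen_Rpower_soliton. }
  rewrite !rsum_mult_l. ring.
Qed.

Lemma energy_sol :
  energy G p (core_sol p r) (halfline_sol G p r) =
  exp (2 * gam p * r) * exp r *
    (gam p * tail_sum G p (kinetic_density p) / 2
     - gam p * tail_sum G p (potential_density p) / p - exp r * core_length G / p).
Proof.
  unfold energy. rewrite kinetic_sol, Lp_pow_sol. field. lra.
Qed.

End Values.

Lemma exp_mass_curve_unbounded (L c g a mu : R) : 0 < L -> 0 < g ->
  exists b, a <= b /\ mu <= exp (2 * g * b) * (L + c / exp b).
Proof.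
  intros HL Hg.
  assert (Hsmall : Rbar_locally p_infty (fun b => 2 * Rabs c / L < exp b)).
  { apply is_lim_exp_p. now exists (2 * Rabs c / L). }
  assert (Hlin : Rbar_locally p_infty (fun b => mu < L * g * b + L / 2)).
  { apply (affine_cvg_p_infty (L * g) (L / 2)); [nra|]. now exists mu. }
  assert (Hfar : Rbar_locally p_infty (fun b => Rmax a 0 < b)) by now exists (Rmax a 0).
  destruct (filter_ex (F := Rbar_locally p_infty) _
    (filter_and _ _ Hsmall (filter_and _ _ Hlin Hfar))) as [b [Hb1 [Hb2 Hb3]]].
  exists b. split; [apply Rle_trans with (Rmax a 0); [apply Rmax_l | lra]|].
  assert (Hb0 : 0 <= b) by (apply Rle_trans with (Rmax a 0); [apply Rmax_r | lra]).
  assert (HX : 0 < exp b) by apply exp_pos.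
  assert (Hc : - (L / 2) < c / exp b).
  { apply Rmult_lt_reg_r with (exp b); [exact HX|].
    unfold Rdiv. rewrite Rmult_assoc, Rinv_l by lra.
    apply Rmult_lt_compat_r with (r := L) in Hb1; [|exact HL].
    unfold Rdiv in Hb1. rewrite Rmult_assoc, Rinv_l, Rmult_1_r in Hb1 by lra.
    pose proof (Rle_abs (- c)). rewrite Rabs_Ropp in *. lra. }
  pose proof (exp_ineq1_le (2 * g * b)).
  apply Rle_trans with ((1 + 2 * g * b) * (L + c / exp b)); [|apply Rmult_le_compat_r; lra].
  apply Rle_trans with ((1 + 2 * g * b) * (L / 2)); [lra|].
  apply Rmult_le_compat_l; nra.
Qed.

Section Asymptotics.

Variables (G : MGraph) (p : R).
Hypotheses (p_gt_2 : 2 < p) (core_pos : 0 < core_length G).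

Lemma mass_sol_onto (a mu : R) :
  mass G (core_sol p a) (halfline_sol G p a) <= mu ->
  exists r, a <= r /\ mass G (core_sol p r) (halfline_sol G p r) = mu.
Proof.
  pose proof (gam_pos p p_gt_2).
  rewrite mass_sol by exact p_gt_2. intros Hmu.
  set (F := fun r => exp (2 * gam p * r) *
    (core_length G + gam p * tail_sum G p (mass_density p) / exp r)).
  destruct (continuous_onto_above F a) with mu as [r [Har Hr]]; [| |exact Hmu|].
  - intros x. apply (continuity_pt_filterlim F).
    apply (ex_derive_continuous (K := R_AbsRing) (V := R_NormedModule)).
    unfold F. auto_derive. pose proof (exp_pos x). lra.
  - intros m. now apply exp_mass_curve_unbounded.
  - exists r. split; [exact Har|]. now rewrite mass_sol.
Qed.

Lemma energy_sol_eventually_neg :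
  Rbar_locally p_infty (fun r => energy G p (core_sol p r) (halfline_sol G p r) < 0).
Proof.
  set (A := gam p * tail_sum G p (kinetic_density p) / 2
            - gam p * tail_sum G p (potential_density p) / p).
  assert (Hbig : Rbar_locally p_infty (fun r => p * A / core_length G < exp r)).
  { apply is_lim_exp_p. now exists (p * A / core_length G). }
  revert Hbig. apply filter_imp. intros r Hr.
  rewrite energy_sol by exact p_gt_2. fold A.
  assert (Hneg : A - exp r * core_length G / p < 0).
  { replace (A - exp r * core_length G / p) with
      ((p * A / core_length G - exp r) * (core_length G / p)) by (field; lra).
    assert (0 < core_length G / p) by (apply Rdiv_lt_0_compat; lra).
    nra. }
  assert (0 < exp (2 * gam p * r) * exp r) by (apply Rmult_lt_0_compat; apply exp_pos).
  nra.
Qed.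

End Asymptotics.

Theorem theorem1p4 (G : MGraph) :
  wf_graph G -> connected_graph G ->
  (1 <= nB G)%nat ->            (* at least one bounded edge *)
  (1 <= nH G)%nat ->            (* noncompact: at least one half-line *)
  even_halflines G ->
  forall p : R, 6 < p ->
  exists mubar : R, 0 < mubar /\
    forall mu : R, mubar <= mu ->
      exists (lam : R) (ub uh : nat -> R -> R),
        positive_solution G p lam ub uh /\
        mass G ub uh = mu /\
        energy G p ub uh < 0.
Proof.
  intros Hwf _ HnB _ Heven p Hp6.
  assert (Hp : 2 < p) by lra.
  assert (Hcore : 0 < core_length G).
  { apply rsum_pos; [exact HnB|]. intros i Hi. apply (proj1 Hwf i Hi). }
  destruct (energy_sol_eventually_neg G p Hp Hcore) as [R0 HR0].
  exists (Rmax 1 (mass G (core_sol p (R0 + 1)) (halfline_sol G p (R0 + 1)))).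
  split; [apply Rlt_le_trans with 1; [lra | apply Rmax_l]|].
  intros mu Hmu.
  destruct (mass_sol_onto G p Hp Hcore (R0 + 1) mu) as [r [Hr Hmass]].
  { apply Rle_trans with (2 := Hmu). apply Rmax_r. }
  exists (exp r * exp r), (core_sol p r), (halfline_sol G p r).
  split; [now apply positive_solution_sol | split; [exact Hmass | apply HR0; lra]].
Qed.
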